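(* Let $P\in\mathbb{C}(\mathbf{x})$, $\mathbf{x}=(x_1,\dots,x_n)$, be a rational function that is homogeneous of degree $d$ (for some integer $d$), and let $S\subseteq\mathbb{R}^n$ be a significant set. If $P(\mathbf{x})=0$ for all $\mathbf{x}\in S$, then $P$ is the zero function.
   Context: A function $f$ is homogeneous of degree $d\in\mathbb{Z}$ if $f(\lambda\mathbf{x})=\lambda^d f(\mathbf{x})$ for all $\lambda\in\mathbb{R}\setminus\{0\}$ and all $\mathbf{x}$ in its domain. A subset $S\subseteq\mathbb{R}^n$ is significant if $x_1\neq0$ for all $\mathbf{x}\in S$ and the set $\hat S=\{(x_2/x_1,\dots,x_n/x_1):\mathbf{x}\in S\}$ contains a nonempty open subset of $\mathbb{R}^{n-1}$. The hypothesis includes that $P$ is defined on $S$. *)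

From HB Require Import structures.
From mathcomp Require Import all_boot all_order all_algebra.
From mathcomp Require Import fraction.
From mathcomp Require Import complex.
From mathcomp Require Import reals.
From mathcomp Require Import mpoly.

Set Implicit Arguments.
Unset Strict Implicit.
Unset Printing Implicit Defensive.

Import Order.TTheory GRing.Theory Num.Theory.
Local Open Scope ring_scope.

Local Notation "x %:F" := (@FracField.tofrac _ x).

Section RatFun.
Variables (R : realType) (n : nat).

(* The field C(x_1,...,x_m) of rational functions in m = n.+1 variables. *)
Definition ratfun := {fraction {mpoly R[i][n.+1]}}.

(* [rf_value P z w] : P is defined at the point z of C^m and P(z) = w,
   i.e. P admits a representation p/q with q(z) <> 0 and p(z)/q(z) = w. *)
Definition rf_value (P : ratfun) (z : 'I_n.+1 -> R[i]) (w : R[i]) : Prop :=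
  exists (p q : {mpoly R[i][n.+1]}),
    [/\ q.@[z] != 0, P = p%:F / q%:F & w = p.@[z] / q.@[z]].

Definition rf_defined (P : ratfun) (z : 'I_n.+1 -> R[i]) : Prop :=
  exists w, rf_value P z w.

Definition rf_homogeneous (P : ratfun) (d : int) : Prop :=
  forall (l : R) (z : 'I_n.+1 -> R[i]) (w : R[i]), l != 0 ->
    rf_value P z w ->
    rf_value P (fun i => (l%:C)%C * z i) ((l%:C)%C ^ d * w).

Definition realpt (x : 'I_n.+1 -> R) : 'I_n.+1 -> R[i] := fun i => ((x i)%:C)%C.

(* S ⊆ R^m is significant: x_1 <> 0 on S, and
   hat S = {(x_2/x_1,...,x_m/x_1) : x in S} ⊆ R^n contains a nonempty open set,
   i.e. (standard topology of R^n) some open box around a point c. *)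
Definition significant (S : ('I_n.+1 -> R) -> Prop) : Prop :=
  (forall x, S x -> x ord0 != 0) /\
  exists (c : 'I_n -> R) (e : R), 0 < e /\
    forall y : 'I_n -> R, (forall j, `|y j - c j| < e) ->
      exists x, S x /\ forall j, y j = x (lift ord0 j) / x ord0.

End RatFun.

From HB Require Import structures.
From mathcomp Require Import all_boot all_order all_algebra.
From mathcomp Require Import fraction complex reals mpoly.
From mathcomp Require Import zify ring lra.
Set Implicit Arguments.
Unset Strict Implicit.
Unset Printing Implicit Defensive.

Import Order.TTheory GRing.Theory Num.Theory.
Local Open Scope ring_scope.

(* Write P = p/q with q(x) <> 0 at some point x of S.  Wherever P takes the
   value 0, so does p; by homogeneity P vanishes at every nonzero real multiple
   of a point of S, so p vanishes on the real cone over the open box contained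
   in hat S.  An affine change of variables maps a small open cube (0, r)^m into
   that cone, and a polynomial vanishing on such a cube is zero: the Kronecker
   substitution x_i = t^(N^i), with N larger than the degree, turns it into a
   univariate polynomial with infinitely many roots t. *)

Lemma digits_inj (k N : nat) (f g : 'I_k -> nat) :
  (forall i, f i < N)%N -> (forall i, g i < N)%N ->
  (\sum_(i < k) f i * N ^ i = \sum_(i < k) g i * N ^ i)%N -> f =1 g.
Proof.
elim: k f g => [|k IH] f g fN gN; first by move=> _ [].
have split_digits h : (\sum_(i < k.+1) h i * N ^ i =
    h ord0 + N * \sum_(i < k) h (lift ord0 i) * N ^ i)%N.
  rewrite big_ord_recl expn0 muln1 big_distrr /=; congr (_ + _)%N.
  by apply: eq_bigr => i _; rewrite expnS; lia.
rewrite !split_digits => fg.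
have N_gt0 : (0 < N)%N by have := fN ord0; lia.
have fg0 : f ord0 = g ord0.
  have := congr1 (modn^~ N) fg.
  by rewrite ![(_ + N * _)%N]addnC ![(N * _)%N]mulnC !modnMDl !modn_small.
have /IH fg_lift : (\sum_(i < k) f (lift ord0 i) * N ^ i =
    \sum_(i < k) g (lift ord0 i) * N ^ i)%N.
  by move: fg; rewrite fg0 => /addnI /eqP; rewrite eqn_pmul2l // => /eqP.
by move=> i; case: (unliftP ord0 i) => [j ->|->] //; apply: fg_lift.
Qed.

Lemma inj_roots_poly_eq0 (K : idomainType) (f : {poly K}) (s : nat -> K) :
  injective s -> (forall j, root f (s j)) -> f = 0.
Proof.
move=> s_inj f_s; apply: (@roots_geq_poly_eq0 _ f [seq s j | j <- iota 0 (size f)]).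
- by apply/allP => x /mapP[j _ ->].
- by rewrite map_inj_uniq ?iota_uniq.
- by rewrite size_map size_iota.
Qed.

Section Kronecker.
Variables (K : idomainType) (k : nat).
Implicit Type p : {mpoly K[k]}.

Definition kron_exp (N : nat) (m : 'X_{1..k}) : nat := (\sum_(i < k) m i * N ^ i)%N.

Definition kronecker p (N : nat) : {poly K} :=
  \sum_(m <- msupp p) p@_m *: 'X^(kron_exp N m).

Lemma horner_kronecker p N t : (kronecker p N).[t] = p.@[fun i => t ^+ (N ^ i)].
Proof.
rewrite /kronecker mevalE horner_sum; apply: eq_bigr => m _.
rewrite hornerZ hornerXn /kron_exp -prodrXr; congr (_ * _).
by apply: eq_bigr => i _; rewrite -exprM mulnC.
Qed.

Lemma kron_exp_inj N : {in [pred m | mdeg m < N] &, injective (kron_exp N)}%N.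
Proof.
have le_mdeg (m : 'X_{1..k}) i : (m i <= mdeg m)%N by rewrite mdegE (bigD1 i) ?leq_addr.
move=> m1 m2 /= m1N m2N eq_exp; apply/mnmP; apply: (digits_inj _ _ eq_exp) => j.
- exact: leq_ltn_trans (le_mdeg m1 j) m1N.
- exact: leq_ltn_trans (le_mdeg m2 j) m2N.
Qed.

Lemma kronecker_eq0 p : kronecker p (msize p).+1 = 0 -> p = 0.
Proof.
move=> p0; apply/mpolyP => m; rewrite mcoeff0.
have [m_p|] := boolP (m \in msupp p); last exact: memN_msupp_eq0.
have := congr1 (fun f : {poly K} => f`_(kron_exp (msize p).+1 m)) p0.
rewrite /kronecker coef_sumMXn coef0 big_mkcond (bigD1_seq m) //= eqxx big1_seq ?addr0 //.
move=> m' /andP[m'm m'_p]; case: eqP => // /kron_exp_inj eq_m; move: m'm.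
by rewrite eq_m ?eqxx // inE ltnS ltnW ?msize_mdeg_lt.
Qed.

Lemma kronecker_roots_mpoly_eq0 p (s : nat -> K) : injective s ->
  (forall j, p.@[fun i => s j ^+ ((msize p).+1 ^ i)] = 0) -> p = 0.
Proof.
move=> s_inj p_s; apply/kronecker_eq0; apply: (inj_roots_poly_eq0 s_inj) => j.
by rewrite /root horner_kronecker p_s.
Qed.

End Kronecker.

Lemma real_cube_mpoly_eq0 (R : rcfType) (k : nat) (p : {mpoly R[i][k]}) (r : R) :
  0 < r -> (forall x : 'I_k -> R, (forall i, 0 < x i < r) ->
              p.@[fun i => (x i)%:C%C] = 0) -> p = 0.
Proof.
move=> r_gt0 p_cube; pose mu := Num.min 1 r.
have mu_gt0 : 0 < mu by rewrite lt_min ltr01 r_gt0.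
have mu_le1 : mu <= 1 by rewrite ge_min lexx.
have mu_ler : mu <= r by rewrite ge_min lexx orbT.
pose t (j : nat) : R := mu / j.+2%:R.
have t_gt0 j : 0 < t j by rewrite divr_gt0.
have t_lt1 j : t j < 1.
  by rewrite ltr_pdivrMr // mul1r (le_lt_trans mu_le1) // ltr1n.
have t_ltr j : t j < r.
  by rewrite ltr_pdivrMr // (le_lt_trans mu_ler) // ltr_pMr // ltr1n.
apply: (@kronecker_roots_mpoly_eq0 _ _ _ (fun j => (t j)%:C%C)).
  move=> j1 j2 /complexI /(mulfI (lt0r_neq0 mu_gt0)) /invr_inj /eqP.
  by rewrite eqr_nat => /eqP [].
move=> j; rewrite -(p_cube (fun i => t j ^+ ((msize p).+1 ^ i))).
  by apply: meval_eq => i; rewrite rmorphXn.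
move=> i; rewrite exprn_gt0 //=.
by rewrite (le_lt_trans _ (t_ltr j)) // ler_iXnr ?expn_gt0 // ltW.
Qed.

(* The affine chart w |-> (w_0 + 1, c_j (w_0 + 1) + w_j): it maps the positive
   cube near 0 into the cone over the box of centre c. *)
Definition cone_point (A : pzRingType) (n : nat) (c : 'I_n -> A) (w : 'I_n.+1 -> A)
    (i : 'I_n.+1) : A :=
  if unlift ord0 i is Some j then c j * (w ord0 + 1) + w i else w ord0 + 1.

Lemma rmorph_cone_point (A B : pzRingType) (f : {rmorphism A -> B}) n
    (c : 'I_n -> A) w i :
  f (cone_point c w i) = cone_point (fun j => f (c j)) (fun k => f (w k)) i.
Proof.
by rewrite /cone_point; case: (unlift ord0 i) => [j|];
  rewrite !(rmorphD f) ?(rmorphM f) ?(rmorphD f) (rmorph1 f).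
Qed.

Lemma cone_point_surj (A : pzRingType) n (c : 'I_n -> A) (v : 'I_n.+1 -> A) :
  exists w, cone_point c w =1 v.
Proof.
exists (fun i => if unlift ord0 i is Some j then v i - c j * v ord0 else v ord0 - 1).
move=> i; rewrite /cone_point unlift_none subrK.
by case: (unliftP ord0 i) => [j ->|->]; rewrite ?liftK ?unlift_none // addrC subrK.
Qed.

Definition cone_chart (A : comNzRingType) n (c : 'I_n -> A) :
    n.+1.-tuple {mpoly A[n.+1]} :=
  [tuple cone_point (fun j => (c j)%:MP) (fun i => 'X_i) i | i < n.+1].

Lemma meval_cone_chart (A : comNzRingType) n (c : 'I_n -> A) p w :
  (p \mPo cone_chart c).@[w] = p.@[cone_point c w].
Proof.
rewrite comp_mpoly_meval; apply: meval_eq => i.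
rewrite tnth_mktuple (rmorph_cone_point (meval w)) /cone_point /=.
by case: (unlift ord0 i) => [j|]; rewrite /= ?mevalC !mevalXU.
Qed.

Lemma cone_point_ratio (F : fieldType) n (c : 'I_n -> F) w j : w ord0 + 1 != 0 ->
  cone_point c w (lift ord0 j) / cone_point c w ord0 - c j = w (lift ord0 j) / (w ord0 + 1).
Proof. by move=> w0; rewrite /cone_point liftK unlift_none; field. Qed.

Lemma real_cone_mpoly_eq0 (R : realType) n (p : {mpoly R[i][n.+1]}) (c : 'I_n -> R)
    (e : R) : 0 < e ->
  (forall z, z ord0 != 0 -> (forall j, `|z (lift ord0 j) / z ord0 - c j| < e) ->
     p.@[realpt z] = 0) ->
  p = 0.
Proof.
move=> e_gt0 p_cone.
have chart0 : p \mPo cone_chart (fun j => (c j)%:C%C) = 0.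
  apply: (real_cube_mpoly_eq0 e_gt0) => w w_cube.
  have /andP[w0_gt0 _] := w_cube ord0.
  have w1_gt0 : 0 < w ord0 + 1 by lra.
  rewrite meval_cone_chart -[RHS](p_cone (cone_point c w)).
  - by apply: meval_eq => i; rewrite /realpt (rmorph_cone_point (real_complex R)).
  - by rewrite /cone_point unlift_none gt_eqF.
  - move=> j; rewrite cone_point_ratio ?gt_eqF //.
    have /andP[wj_gt0 wj_lte] := w_cube (lift ord0 j).
    rewrite ger0_norm ?divr_ge0 ?ltW // ltr_pdivrMr // (lt_le_trans wj_lte) //.
    by rewrite ler_peMr ?ltW //; lra.
apply: (real_cube_mpoly_eq0 ltr01) => x _.
have [w wE] := cone_point_surj (fun j => (c j)%:C%C) (fun i => (x i)%:C%C).
by rewrite -(meval_eq _ wE) -meval_cone_chart chart0 meval0.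
Qed.

Local Notation "x %:F" := (@FracField.tofrac _ x).

Lemma rf_value_frac (R : realType) (n : nat) (p q : {mpoly R[i][n.+1]}) z w :
  q != 0 -> rf_value (p%:F / q%:F) z w -> p.@[z] = w * q.@[z].
Proof.
move=> q_neq0 [p' [q' [q'z_neq0 pq_eq ->]]].
have q'_neq0 : q' != 0 by apply: contraNneq q'z_neq0 => ->; rewrite meval0.
move/eqP: pq_eq; rewrite eqr_div ?tofrac_eq0 // -!tofracM tofrac_eq.
move=> /eqP /(congr1 (meval z)); rewrite !mevalM => cross.
by apply: (mulIf q'z_neq0); rewrite cross mulrAC divfK.
Qed.

Lemma proportional_realpt (R : realType) (n : nat) (x z : 'I_n.+1 -> R) :
  x ord0 != 0 -> z ord0 != 0 ->
  (forall j, z (lift ord0 j) / z ord0 = x (lift ord0 j) / x ord0) ->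
  realpt z =1 (fun i => (z ord0 / x ord0)%:C%C * realpt x i).
Proof.
move=> x0 z0 xz i; rewrite /realpt -rmorphM; congr (_%:C)%C.
case: (unliftP ord0 i) => [j ->|->]; last by rewrite divfK.
by rewrite -[LHS](divfK z0) xz; ring.
Qed.

Theorem lemma2 (R : realType) (n : nat) (P : ratfun R n) (d : int)
    (S : ('I_n.+1 -> R) -> Prop) :
  rf_homogeneous P d ->
  significant S ->
  (forall x, S x -> rf_value P (realpt x) 0) ->
  P = 0.
Proof.
move=> P_hom [S_x0 [c [e [e_gt0 S_box]]]] P_S.
have [|x1 [S_x1 _]] := S_box c; first by move=> j; rewrite subrr normr0.
have [p [q [qx1_neq0 PE _]]] := P_S _ S_x1.
have q_neq0 : q != 0 by apply: contraNneq qx1_neq0 => ->; rewrite meval0.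
suff p0 : p = 0 by rewrite PE p0 tofrac0 mul0r.
apply: (real_cone_mpoly_eq0 e_gt0) => z z0 /S_box [x [S_x xz]].
have l_neq0 : z ord0 / x ord0 != 0 by rewrite mulf_eq0 invr_eq0 negb_or z0 S_x0.
have := P_hom _ _ _ l_neq0 (P_S _ S_x); rewrite PE mulr0.
move=> /(rf_value_frac q_neq0); rewrite mul0r => <-.
by apply: meval_eq; apply: proportional_realpt => //; apply: S_x0.
Qed.
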